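(* Let $G_1$ and $G_2$ be OPERA DAGs with $G_1\sim G_2$. Then $G_1$ and $G_2$ are root consistent: for every event $v$ contained in both DAGs and every $j\ge 1$, if $v$ is a root of frame $j$ in $G_1$, then $v$ is a root of frame $j$ in $G_2$.
   Context: An OPERA DAG is a finite directed acyclic graph whose vertices are events. Each event $v$ has a creator $cr(v)$ among a fixed finite set of nodes, the same for both DAGs. Each node $i$ has weight (validating power) $w_i>0$, and $W=\sum_i w_i$. An edge $(u,v)$ means that $u$ references $v$ as a parent. An event $u$ reaches an event $v$ if $v$ is $u$ or an ancestor of $u$. $G[v]$ is the subgraph induced on $v$ and all its ancestors, and $G_1\sim G_2$ means $G_1[v]=G_2[v]$ for every event $v$ in both DAGs. A leaf event is the first event created by a node (an event with no parent created by the same node). Roots and frames are defined recursively in a DAG $G$. The root set $R_1$ of frame 1 consists of all leaf events. For $k\ge 1$, the root set $R_{k+1}$ consists of all events $r$ with $r\notin R_1\cup\dots\cup R_k$ such that the creators of the roots in $R_k$ reached by $r$ have total weight greater than $2W/3$. An event in $R_j$ is a root of frame $j$. *)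

From HB Require Import structures.
From mathcomp Require Import all_boot all_order all_algebra.
Set Implicit Arguments. Unset Strict Implicit. Unset Printing Implicit Defensive.
Import Order.TTheory GRing.Theory Num.Theory.
Local Open Scope ring_scope.

(* Events live in a finite universe E; every event e has a creator cr e
   among the nodes N (a fixed finite set, common to both DAGs). *)

(* An OPERA DAG over the event universe E: a finite set of events and an
   edge relation (edge u v : u references v as a parent), with edges only
   between events of the DAG, and no cycles. *)
Record opera_dag (E : finType) := OperaDag {
  events : {set E};
  edge : rel E;
  edge_in : forall u v, edge u v -> (u \in events) && (v \in events);
  edge_acyclic : forall u v, edge u v -> ~~ connect edge v u
}.

Section Opera.
Variables (E N : finType) (R : realFieldType) (cr : E -> N) (w : N -> R).

Definition reaches (G : opera_dag E) (u v : E) : bool := connect (edge G) u v.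

Definition leaves (G : opera_dag E) : {set E} :=
  [set v in events G | [forall u, edge G v u ==> (cr u != cr v)]].

Definition total_weight : R := \sum_(i : N) w i.

Definition reached_weight (G : opera_dag E) (S : {set E}) (r : E) : R :=
  \sum_(i in [set cr x | x in S & reaches G r x]) w i.

(* roots_aux G k = (R_{k+1}, R_1 :|: ... :|: R_{k+1}). *)
Fixpoint roots_aux (G : opera_dag E) (k : nat) : {set E} * {set E} :=
  match k with
  | 0 => (leaves G, leaves G)
  | k'.+1 =>
      let: (Rk, Uk) := roots_aux G k' in
      let Rn := [set r in events G |
                  (r \notin Uk) && (2 * total_weight / 3 < reached_weight G Rk r)] in
      (Rn, Uk :|: Rn)
  end.

(* R_j, the root set of frame j (meaningful for j >= 1). *)
Definition root_set (G : opera_dag E) (j : nat) : {set E} := (roots_aux G j.-1).1.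

Definition is_root (G : opera_dag E) (j : nat) (v : E) : bool :=
  (0 < j)%N && (v \in root_set G j).

Definition anc (G : opera_dag E) (v : E) : {set E} := [set u | reaches G v u].

(* G1[v] = G2[v]: same induced subgraph on v and its ancestors
   (creators are a global labelling, hence automatically equal). *)
Definition same_past (G1 G2 : opera_dag E) (v : E) : Prop :=
  anc G1 v = anc G2 v /\
  (forall x y, x \in anc G1 v -> y \in anc G1 v -> edge G1 x y = edge G2 x y).

Definition dag_sim (G1 G2 : opera_dag E) : Prop :=
  forall v, v \in events G1 -> v \in events G2 -> same_past G1 G2 v.

End Opera.

From HB Require Import structures.
From mathcomp Require Import all_boot all_order all_algebra.
Set Implicit Arguments. Unset Strict Implicit. Unset Printing Implicit Defensive.
Import Order.TTheory GRing.Theory Num.Theory.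
Local Open Scope ring_scope.

(* Whether an event is a leaf, and whether it lies in R_k or in R_1 :|: ... :|: R_k,
   is decided by its past alone: leaf status by its outgoing edges, membership of
   R_(k+1) by the weight of the creators of its ancestors in R_k.  Since G1 ~ G2
   means that every common event has the same past in both DAGs, induction on k
   shows that both memberships agree on common events. *)

Lemma reaches_events (E : finType) (G : opera_dag E) (u v : E) :
  reaches G u v -> u \in events G -> v \in events G.
Proof.
case/connectP => p; elim: p u => [|y p IHp] u /=; first by move=> _ ->.
case/andP => uy path_yp v_last _; apply: IHp path_yp v_last _.
by case/andP: (edge_in uy).
Qed.

Section SamePast.
Variables (E : finType) (G1 G2 : opera_dag E) (v : E).
Hypothesis same_v : same_past G1 G2 v.

Lemma same_past_reaches (u : E) : reaches G1 v u = reaches G2 v u.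
Proof. by case: same_v => anc_eq _; move/setP/(_ u): anc_eq; rewrite !inE. Qed.

Lemma same_past_edge (u : E) : edge G1 v u = edge G2 v u.
Proof.
case: same_v => anc_eq edge_eq.
have v_anc : v \in anc G1 v by rewrite inE /reaches connect0.
apply/idP/idP => vu.
  by rewrite -edge_eq // inE /reaches connect1.
have u_anc : u \in anc G1 v by rewrite anc_eq inE /reaches connect1.
by rewrite edge_eq.
Qed.

End SamePast.

Section DagSim.
Variables (E N : finType) (R : realFieldType) (cr : E -> N) (w : N -> R).
Variables (G1 G2 : opera_dag E).
Hypothesis sim : dag_sim G1 G2.

Definition agree_on_common (A1 A2 : {set E}) : Prop :=
  forall x, x \in events G1 -> x \in events G2 -> (x \in A1) = (x \in A2).

Lemma dag_sim_leaves : agree_on_common (leaves cr G1) (leaves cr G2).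
Proof.
move=> x x1 x2; rewrite !inE x1 x2 /=.
by apply: eq_forallb => u; rewrite (same_past_edge (sim x1 x2)).
Qed.

Lemma dag_sim_reached_weight (S1 S2 : {set E}) (x : E) :
  agree_on_common S1 S2 -> x \in events G1 -> x \in events G2 ->
  reached_weight cr w G1 S1 x = reached_weight cr w G2 S2 x.
Proof.
move=> S12 x1 x2; have reach_eq := same_past_reaches (sim x1 x2).
have reached_eq y : (y \in S1) && reaches G1 x y = (y \in S2) && reaches G2 x y.
  rewrite -reach_eq; have [xy1|] := boolP (reaches G1 x y); last by rewrite !andbF.
  have xy2 : reaches G2 x y by rewrite -reach_eq.
  by rewrite !andbT S12 // ?(reaches_events xy1) ?(reaches_events xy2).
rewrite /reached_weight; apply: eq_bigl => i.
by apply/imsetP/imsetP => -[y y_in ->]; exists y => //; move: y_in;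
  rewrite !inE reached_eq.
Qed.

Lemma dag_sim_roots_aux (k : nat) :
  agree_on_common (roots_aux cr w G1 k).1 (roots_aux cr w G2 k).1 /\
  agree_on_common (roots_aux cr w G1 k).2 (roots_aux cr w G2 k).2.
Proof.
elim: k => [|k]; first by split; apply: dag_sim_leaves.
rewrite /=; case: (roots_aux cr w G1 k) => [R1 U1].
case: (roots_aux cr w G2 k) => [R2 U2] /= [R12 U12].
by split=> x x1 x2; rewrite !inE x1 x2 U12 // (dag_sim_reached_weight R12 x1 x2).
Qed.

End DagSim.

Theorem mainTheorem3 (E N : finType) (R : realFieldType) (cr : E -> N)
  (w : N -> R) (w_pos : forall i, 0 < w i) (G1 G2 : opera_dag E) :
  dag_sim G1 G2 ->
  forall (v : E) (j : nat),
    v \in events G1 -> v \in events G2 -> (1 <= j)%N ->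
    v \in root_set cr w G1 j -> v \in root_set cr w G2 j.
Proof.
move=> sim v j v1 v2 _.
by have [roots_eq _] := dag_sim_roots_aux cr w sim j.-1; rewrite /root_set roots_eq.
Qed.
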